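(* Let $A$ be an integral domain with fraction field $K$, and let $U$ and $A^{\operatorname{ua}}$ be as in the context. Then $[1]^{\mathrm{reg}(A)}_A = [1]^{A^\circ}_A = \mathbb{Z}\langle U \rangle = U \cup \{0\}$, and therefore $A^{\operatorname{ua}} = ([1]^{\mathrm{reg}(A)}_A \setminus \{0\})^{-1}A$. Moreover, $[1]^{\mathrm{reg}(A)}_A=A$ if and only if $K$ is the only unit-additive overring of $A$.
   Context: A commutative ring is unit-additive if for all units $u,v$, $u+v$ is a unit or nilpotent. For the domain $A$, $\mathrm{reg}(A)=A^\circ=A\setminus\{0\}$. Define $W_0=\{1\}$, $V_0=A^\times$, and for $i\ge1$ let $W_i$ be the set of nonzero finite sums of elements of $V_{i-1}$ and $V_i=\{x\in A\mid ax\in W_i\text{ for some nonzero } a\in A\}$; set $U=\bigcup_i V_i$. It is known that $U$ is a saturated multiplicative set closed under nonzero sums and that $A^{\operatorname{ua}}:=U^{-1}A$ is the unique smallest unit-additive overring of $A$ (the unit-additive closure). For $T\subseteq A$, $[1]^T_A$ is the smallest additive subgroup $F$ of $A$ containing $1$ such that $ta\in F$ with $t\in T$, $a\in A$ implies $a\in F$. $\mathbb{Z}\langle U\rangle$ is the subring of $A$ generated by $U$. *)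

From mathcomp Require Import all_boot all_algebra fraction.
Set Implicit Arguments. Unset Strict Implicit. Unset Printing Implicit Defensive.
Import GRing.Theory.
Local Open Scope ring_scope.

Section UA.
Variable A : idomainType.

Definition regular (t : A) : Prop := forall a : A, t * a = 0 -> a = 0.
Definition nonzeroA (t : A) : Prop := t != 0.

Definition nzsums (P : A -> Prop) (y : A) : Prop :=
  y != 0 /\ exists s : seq A, (forall z, z \in s -> P z) /\ y = \sum_(z <- s) z.

Fixpoint Vset (i : nat) : A -> Prop :=
  match i with
  | 0 => fun x => x \is a GRing.unit
  | i'.+1 => fun x => exists a : A, a != 0 /\ nzsums (Vset i') (a * x)
  end.

Definition Wset (i : nat) : A -> Prop :=
  match i with
  | 0 => fun x => x = 1
  | i'.+1 => nzsums (Vset i')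
  end.

Definition Uset (x : A) : Prop := exists i, Vset i x.

Definition one_closure (T : A -> Prop) (x : A) : Prop :=
  forall F : A -> Prop,
    F 0 -> (forall y z, F y -> F z -> F (y - z)) -> F 1 ->
    (forall t a, T t -> F (t * a) -> F a) -> F x.

Definition gen_subring (S : A -> Prop) (x : A) : Prop :=
  forall F : A -> Prop,
    F 1 -> (forall y z, F y -> F z -> F (y - z)) ->
    (forall y z, F y -> F z -> F (y * z)) ->
    (forall u, S u -> F u) -> F x.

Definition localization (S : A -> Prop) (z : {fraction A}) : Prop :=
  exists a s : A, S s /\ z = (FracField.tofrac a) / (FracField.tofrac s).

Definition ua_closure : {fraction A} -> Prop := localization Uset.

Definition overring (R : {fraction A} -> Prop) : Prop :=
  R 1 /\ (forall y z, R y -> R z -> R (y - z)) /\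
  (forall y z, R y -> R z -> R (y * z)) /\
  (forall a : A, R (FracField.tofrac a)).

Definition unit_in (R : {fraction A} -> Prop) (u : {fraction A}) : Prop :=
  R u /\ exists w, R w /\ u * w = 1.

Definition unit_additive (R : {fraction A} -> Prop) : Prop :=
  forall u v, unit_in R u -> unit_in R v ->
    unit_in R (u + v) \/ exists n : nat, (u + v) ^+ n = 0.

End UA.

From mathcomp Require Import all_boot all_algebra fraction.
Import GRing.Theory.
Local Open Scope ring_scope.
Set Implicit Arguments. Unset Strict Implicit.

(* U is a saturated multiplicative set closed under nonzero sums, so U ∪ {0}
   is a subring of A containing 1 and satisfying the cancellation rule of
   [1]^{A°}; hence it contains [1]^{A°} and Z<U>.  Conversely every element of
   V_i is reached from 1 by finitely many sums and cancellations, by induction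
   on i.  In a domain reg(A) = A°.  For the overrings: the elements of U become
   units in every unit-additive overring, because in a field a sum of units
   that is not a unit must be 0; so when U = A° every unit-additive overring
   contains all 1/b, i.e. is K.  Conversely U^{-1}A is a unit-additive overring,
   and if it is K then 1/x = a/s gives s = a x, so x ∈ U by saturation. *)

Lemma subr_closed_sum (V : zmodType) (F : V -> Prop) (s : seq V) :
  F 0 -> (forall y z, F y -> F z -> F (y - z)) ->
  (forall z, z \in s -> F z) -> F (\sum_(z <- s) z).
Proof.
move=> F0 FB; have FD y z : F y -> F z -> F (y + z).
  by move=> Fy Fz; rewrite -[z]opprK -[- z]sub0r; apply: FB (FB _ _ F0 Fz).
elim: s => [|u s IHs] Fs; first by rewrite big_nil.
rewrite big_cons; apply: FD; first by apply: Fs; rewrite mem_head.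
by apply: IHs => z zs; apply: Fs; rewrite inE zs orbT.
Qed.

Section UnitAdditiveClosure.
Variable A : idomainType.
Implicit Types (P Q R : A -> Prop) (x y t a s : A).

Local Notation U := (@Uset A).

Definition Uset0 x : Prop := U x \/ x = 0.

Lemma nzsums1 P x : P x -> x != 0 -> nzsums P x.
Proof.
by move=> Px x0; split=> //; exists [:: x]; rewrite big_seq1; split=> // z /[!inE] /eqP->.
Qed.

Lemma nzsumsM P Q R x y : (forall u v, P u -> Q v -> R (u * v)) ->
  nzsums P x -> nzsums Q y -> nzsums R (x * y).
Proof.
move=> PQR [x0 [s [Ps sx]]] [y0 [t [Qt ty]]]; split; first exact: mulf_neq0 x0 y0.
exists [seq u * v | u <- s, v <- t].
split; last by rewrite sx ty big_allpairs_dep big_distrlr.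
by move=> _ /allpairsP[[u v] /= [us vt ->]]; exact: PQR (Ps _ us) (Qt _ vt).
Qed.

Lemma Vset_neq0 i x : Vset i x -> x != 0.
Proof.
case: i => [|i] /=; first by apply: contraTneq => ->; rewrite unitr0.
by move=> [a [_ [ax0 _]]]; apply: contraNneq ax0 => ->; rewrite mulr0.
Qed.

Lemma Vset_succ i x : Vset i x -> Vset i.+1 x.
Proof.
by move=> Vx; exists 1; rewrite oner_neq0 mul1r; split=> //; apply: nzsums1 (Vset_neq0 Vx).
Qed.

Lemma Vset_leq i j x : (i <= j)%N -> Vset i x -> Vset j x.
Proof. by move=> /subnK <-; elim: (j - i)%N => //= k IHk Vx; apply/Vset_succ/IHk. Qed.

Lemma Vset_unitl i u x : u \is a GRing.unit -> Vset i x -> Vset i.+1 (u * x).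
Proof.
move=> uU Vx; exists u^-1; split; first by rewrite invr_eq0 (Vset_neq0 (i := 0) uU).
by rewrite mulKr //; apply: nzsums1 (Vset_neq0 Vx).
Qed.

Lemma VsetM i j x y : Vset i x -> Vset j y -> Vset (i + j).+1 (x * y).
Proof.
elim: i j x y => [|i IHi] j x y Vx Vy; first exact: Vset_unitl.
case: j Vy => [|j] Vy; first by rewrite mulrC addn0; apply: Vset_unitl.
have [[a [a0 ax]] [b [b0 yb]]] := (Vx, Vy).
apply: Vset_succ; rewrite addnS addSn; exists (a * b); split; first exact: mulf_neq0.
rewrite [_ * _]mulrACA; apply: nzsumsM ax yb => u v; exact: IHi.
Qed.

Lemma Vset_common_index (s : seq A) :
  (forall z, z \in s -> U z) -> exists k, forall z, z \in s -> Vset k z.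
Proof.
elim: s => [|u s IHs] Us; first by exists 0%N.
have [i Vu] := Us u (mem_head u s).
have [k Vs] := IHs (fun z zs => Us z (mem_behead (s := u :: s) zs)).
exists (maxn i k) => z /[!inE] /orP[/eqP-> | zs].
  exact: Vset_leq (leq_maxl i k) Vu.
exact: Vset_leq (leq_maxr i k) (Vs z zs).
Qed.

Lemma Uset_neq0 x : U x -> x != 0.
Proof. by move=> [i /Vset_neq0]. Qed.

Lemma Uset_unit x : x \is a GRing.unit -> U x.
Proof. by exists 0%N. Qed.

Lemma Uset1 : U 1.
Proof. exact/Uset_unit/unitr1. Qed.

Lemma Uset_nzsums y : nzsums U y -> U y.
Proof.
move=> [y0 [s [Us ys]]]; have [k Vs] := Vset_common_index Us.
by exists k.+1, 1; rewrite oner_neq0 mul1r; split=> //; split=> //; exists s.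
Qed.

Lemma UsetD x y : U x -> U y -> x + y != 0 -> U (x + y).
Proof.
move=> Ux Uy xy0; apply: Uset_nzsums; split=> //; exists [:: x; y].
by rewrite big_cons big_seq1; split=> // z /[!inE] /orP[] /eqP->.
Qed.

Lemma UsetN x : U x -> U (- x).
Proof.
move=> [i Vx]; exists i.+1, (-1); rewrite oppr_eq0 oner_neq0 mulN1r opprK.
by split=> //; apply: nzsums1 (Vset_neq0 Vx).
Qed.

Lemma UsetM x y : U x -> U y -> U (x * y).
Proof. by move=> [i Vx] [j Vy]; exists (i + j).+1; apply: VsetM. Qed.

Lemma Uset_saturated t a : t != 0 -> U (t * a) -> U a.
Proof.
by move=> t0 [i Vta]; exists i.+1, t; split=> //; apply: nzsums1 (Vset_neq0 Vta).
Qed.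

Lemma Uset0B y z : Uset0 y -> Uset0 z -> Uset0 (y - z).
Proof.
have [-> _ _|yz0] := eqVneq (y - z) 0; first by right.
move=> [Uy|->] [Uz|z0]; rewrite ?z0 ?subr0 ?sub0r; try by left.
- by left; apply: UsetD Uy (UsetN Uz) yz0.
- by left; apply: UsetN.
- by right.
Qed.

Lemma Uset0M y z : Uset0 y -> Uset0 z -> Uset0 (y * z).
Proof.
by move=> [Uy|->] [Uz|->]; rewrite ?mulr0 ?mul0r; [left; apply: UsetM | right..].
Qed.

Lemma regular_neq0 t : regular t <-> t != 0.
Proof.
split=> [t_reg | t0 a /eqP]; last by rewrite mulf_eq0 (negbTE t0) => /eqP.
by apply: contra_neq (@oner_neq0 A) => t0; apply: t_reg; rewrite t0 mul0r.
Qed.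

Lemma one_closure_ext (T T' : A -> Prop) x :
  (forall t, T t <-> T' t) -> one_closure T x <-> one_closure T' x.
Proof.
by move=> TT'; split=> Tx F F0 FB F1 FT; apply: Tx => // t a /TT'; apply: FT.
Qed.

Lemma one_closure_nonzero_Uset0 x : one_closure (@nonzeroA A) x -> Uset0 x.
Proof.
move=> /(_ Uset0); apply; [by right | exact: Uset0B | left; exact: Uset1 |].
move=> t a t0 [Uta|/eqP]; first by left; apply: Uset_saturated Uta.
by rewrite mulf_eq0 (negbTE t0) => /eqP; right.
Qed.

Lemma Vset_one_closure i x : Vset i x -> one_closure (@nonzeroA A) x.
Proof.
move=> + F F0 FB F1 FT; elim: i x => [|i IHi] x /=.
  move=> xU; apply: (FT x^-1); last by rewrite mulVr.
  by rewrite /nonzeroA invr_eq0 (Vset_neq0 (i := 0) xU).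
move=> [a [a0 [_ [s [Vs ax]]]]]; apply: (FT a) => //.
by rewrite ax; apply: subr_closed_sum => // z /Vs; apply: IHi.
Qed.

Lemma one_closure_nonzeroP x : one_closure (@nonzeroA A) x <-> Uset0 x.
Proof.
split=> [|[[i /Vset_one_closure] //|->]]; first exact: one_closure_nonzero_Uset0.
by move=> F F0.
Qed.

Lemma gen_subring_UsetP x : gen_subring U x <-> Uset0 x.
Proof.
split=> [/(_ Uset0)|[Ux|->] F F1 FB FM FU]; last 2 first.
- exact: FU.
- by rewrite -(subrr 1); apply: FB.
by apply; [left; exact: Uset1 | exact: Uset0B | exact: Uset0M | left].
Qed.

Lemma one_closure_regularP x : one_closure (@regular A) x <-> Uset0 x.
Proof.
by apply: iff_trans (one_closure_nonzeroP x); apply: one_closure_ext; apply: regular_neq0.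
Qed.

Lemma one_closure_regular_neq0P s : one_closure (@regular A) s /\ s != 0 <-> U s.
Proof.
split=> [[/one_closure_regularP[//|->]] /eqP // | Us].
by split; [apply/one_closure_regularP; left | apply: Uset_neq0].
Qed.

End UnitAdditiveClosure.

Local Notation "x %:F" := (@FracField.tofrac _ x).

Lemma tofrac_div_surj (A : idomainType) (z : {fraction A}) :
  exists a b : A, b != 0 /\ z = a%:F / b%:F.
Proof.
elim/quotW: z => x; exists \n_x, \d_x; split; first exact: denom_ratioP.
unlock FracField.tofrac; rewrite !piE /= /FracField.mulf /FracField.invf /=.
by rewrite !numden_Ratio ?oner_neq0 ?denom_ratioP // mulr1 mul1r Ratio_numden.
Qed.

Section Localization.
Variables (A : idomainType) (S : A -> Prop).
Hypotheses (S1 : S 1) (SM : forall s t : A, S s -> S t -> S (s * t)).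
Hypothesis S_neq0 : forall s : A, S s -> s != 0.

Let tofracS_neq0 s : S s -> s%:F != 0.
Proof. by move=> /S_neq0; rewrite tofrac_eq0. Qed.

Lemma localization_tofrac (a : A) : localization S a%:F.
Proof. by exists a, 1; split; last by rewrite tofrac1 divr1. Qed.

Lemma localization_overring : overring (localization S).
Proof.
split; first by rewrite -tofrac1; apply: localization_tofrac.
split; last split; last exact: localization_tofrac.
- move=> _ _ [a [s [Ss ->]]] [b [t [St ->]]]; exists (a * t + - b * s), (s * t).
  split; first exact: SM.
  by rewrite -mulNr addf_div ?tofracS_neq0 // tofracD !tofracM tofracN.
- move=> _ _ [a [s [Ss ->]]] [b [t [St ->]]]; exists (a * b), (s * t).
  by split; [apply: SM | rewrite mulf_div !tofracM].
Qed.

Hypothesis S_saturated : forall t a : A, t != 0 -> S (t * a) -> S a.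

Lemma localization_unitP u :
  unit_in (localization S) u -> exists a s, S a /\ S s /\ u = a%:F / s%:F.
Proof.
move=> [[a [s [Ss ->]]] [_ [[b [t [St ->]]] abst]]]; exists a, s; split=> //.
have st0 : s * t != 0 by apply/S_neq0/SM.
have ab_st : a * b = s * t.
  apply/eqP; rewrite -tofrac_eq; apply/eqP; move: abst.
  rewrite mulf_div -!tofracM => /(canRL (divfK (tofracS_neq0 (SM Ss St)))).
  by rewrite mul1r.
have b0 : b != 0 by apply: contraNneq st0 => b0; rewrite -ab_st b0 mulr0.
by apply: (S_saturated b0); rewrite mulrC ab_st; apply: SM.
Qed.

Hypothesis SD : forall s t : A, S s -> S t -> s + t != 0 -> S (s + t).

Lemma localization_unit_additive : unit_additive (localization S).
Proof.
move=> u v /localization_unitP[a [s [Sa [Ss ->]]]].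
move=> /localization_unitP[c [t [Sc [St ->]]]].
rewrite addf_div ?tofracS_neq0 // -!tofracM -tofracD.
have [->|n0] := eqVneq (a * t + c * s) 0.
  by right; exists 1%N; rewrite expr1 tofrac0 mul0r.
have Sn : S (a * t + c * s) by apply: SD n0; apply: SM.
left; split; first by exists (a * t + c * s), (s * t); split=> //; apply: SM.
exists ((s * t)%:F / (a * t + c * s)%:F); split; first by exists (s * t), (a * t + c * s).
by rewrite mulf_div [(s * t)%:F * _]mulrC divff // mulf_neq0 ?tofracS_neq0 //; apply: SM.
Qed.

End Localization.

Section UnitAdditiveOverrings.
Variables (A : idomainType) (R : {fraction A} -> Prop).

Lemma unit_additive_sum (s : seq {fraction A}) : unit_additive R ->
    (forall u, u \in s -> unit_in R u) ->
  \sum_(u <- s) u = 0 \/ unit_in R (\sum_(u <- s) u).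
Proof.
move=> UA; elim: s => [|u s IHs] Rs; first by rewrite big_nil; left.
rewrite big_cons; have Ru := Rs u (mem_head u s).
have [->|Rsum] := IHs (fun v vs => Rs v (mem_behead (s := u :: s) vs)).
  by right; rewrite addr0.
have [|[n /eqP]] := UA _ _ Ru Rsum; first by right.
by rewrite expf_eq0 => /andP[_ /eqP]; left.
Qed.

Hypotheses (R_overring : overring R) (R_unit_additive : unit_additive R).

Lemma Vset_unit_in i (x : A) : Vset i x -> unit_in R x%:F.
Proof.
have [_ [_ [RM RA]]] := R_overring.
elim: i x => [|i IHi] x /=.
  by move=> xU; split=> //; exists x^-1%:F; split=> //; rewrite -tofracM mulrV // tofrac1.
move=> [a [a0 [ax0 [s [Vs ax_s]]]]].
have units_s u : u \in map (fun z => z%:F) s -> unit_in R u.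
  by move=> /mapP[z zs ->]; exact: IHi (Vs z zs).
have ax_sF : (a * x)%:F = \sum_(u <- map (fun z => z%:F) s) u.
  by rewrite ax_s rmorph_sum big_map.
have [s0|[_ [w [Rw sw]]]] := unit_additive_sum R_unit_additive units_s.
  by move: ax0; rewrite -tofrac_eq0 ax_sF s0 eqxx.
split=> //; exists (a%:F * w); split; first exact: RM.
by rewrite mulrA -tofracM [x * a]mulrC ax_sF.
Qed.

Lemma unit_additive_overring_full : (forall x : A, x != 0 -> Uset x) -> forall z, R z.
Proof.
move=> U_nz z; have [a [b [b0 ->]]] := tofrac_div_surj z.
have [i Vb] := U_nz b b0; have [_ [w [Rw bw]]] := Vset_unit_in Vb.
have bF0 : b%:F != 0 by rewrite tofrac_eq0.
have -> : b%:F^-1 = w by apply: (mulfI bF0); rewrite bw mulfV.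
by have [_ [_ [RM RA]]] := R_overring; apply: RM.
Qed.

End UnitAdditiveOverrings.

Lemma unit_additive_full (A : idomainType) (R : {fraction A} -> Prop) :
  (forall z, R z) -> unit_additive R.
Proof.
move=> Rz u v _ _; have [->|uv0] := eqVneq (u + v) 0; first by right; exists 1%N.
by left; split=> //; exists (u + v)^-1; split; last exact: mulfV.
Qed.

Lemma ua_closure_overring (A : idomainType) : overring (@ua_closure A).
Proof. exact: localization_overring (@Uset1 A) (@UsetM A) (@Uset_neq0 A). Qed.

Lemma ua_closure_unit_additive (A : idomainType) : unit_additive (@ua_closure A).
Proof.
exact: localization_unit_additive (@UsetM A) (@Uset_neq0 A)
  (@Uset_saturated A) (@UsetD A).
Qed.

Lemma ua_closure_full_Uset (A : idomainType) :
  (forall z, @ua_closure A z) -> forall x : A, x != 0 -> Uset x.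
Proof.
move=> ua_full x x0; have [a [s [Us xinv]]] := ua_full x%:F^-1.
have xF0 : x%:F != 0 by rewrite tofrac_eq0.
have sF0 : s%:F != 0 by rewrite tofrac_eq0 Uset_neq0.
have aF : a%:F = x%:F^-1 * s%:F by rewrite xinv divfK.
have ax_s : a * x = s.
  by apply/eqP; rewrite -tofrac_eq tofracM aF mulrAC mulVf ?mul1r.
have a0 : a != 0 by apply: contraNneq (Uset_neq0 Us) => a0; rewrite -ax_s a0 mul0r.
by apply: (Uset_saturated a0); rewrite ax_s.
Qed.

Unset Implicit Arguments.

Theorem theorem9p8 (A : idomainType) :
  (forall x : A,
     (one_closure (@regular A) x <-> one_closure (@nonzeroA A) x) /\
     (one_closure (@nonzeroA A) x <-> gen_subring (@Uset A) x) /\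
     (gen_subring (@Uset A) x <-> (Uset x \/ x = 0))) /\
  (forall z : {fraction A},
     ua_closure z <->
     localization (fun s : A => one_closure (@regular A) s /\ s != 0) z) /\
  ((forall x : A, one_closure (@regular A) x) <->
   (forall R : {fraction A} -> Prop, overring R ->
      (unit_additive R <-> (forall z, R z)))).
Proof.
split.
  move=> x; split; [|split]; last exact: gen_subring_UsetP.
  - exact: iff_trans (one_closure_regularP x) (iff_sym (one_closure_nonzeroP x)).
  - exact: iff_trans (one_closure_nonzeroP x) (iff_sym (gen_subring_UsetP x)).
split.
  move=> z; split=> -[a [s [Us ->]]]; exists a, s.
    by split=> //; apply/one_closure_regular_neq0P.
  by split=> //; apply/one_closure_regular_neq0P.
split=> [all_one R R_over | only_K x].
  have U_nz (x : A) : x != 0 -> Uset x.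
    by case/one_closure_regularP: (all_one x) => // ->; rewrite eqxx.
  split=> [R_ua | R_full]; first exact: unit_additive_overring_full.
  exact: unit_additive_full.
apply/one_closure_regularP; have [->|x0] := eqVneq x 0; [by right | left].
apply: ua_closure_full_Uset x0.
exact: (only_K _ (@ua_closure_overring A)).1 (@ua_closure_unit_additive A).
Qed.
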